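(* In the setting below: (i) $(e_j)$ is a normalized monotone basis of $Z$; (ii) if $(u_j)$ is boundedly complete, then so is $(e_j)$; (iii) for every $\sum_ia_ie_i\in Z$ the series $\sum_ia_ix_i$ converges in $X$, and the map $Q:Z\to X$, $Q(\sum_ja_je_j)=\sum_ja_jx_j$, is a quotient map with $\|Q\|\le1$ such that $B_X\subseteq Q((1+\varepsilon)B_Z)$ for every $\varepsilon>0$.
   Context: Setting: $X$ is a separable Banach space, $(x_n)$ a sequence in $S_X$ such that $\{\pm x_n\}$ is dense in $S_X$; $U$ is a Banach space with a normalized $1$-unconditional basis $(u_n)$. For finite $I,J\subseteq\mathbb N$, $I<J$ means $\max I<\min J$. On $c_{00}$ with unit vectors $(e_i)$ define, for $a=\sum_ia_ie_i$, $$\|a\|_Z=\max\left\{\left\|\sum_{j=1}^k\Big\|\sum_{i\in I_j}a_ix_i\Big\|_Xu_{\min I_j}\right\|_U: k\in\mathbb N,\ I_1<\dots<I_k\text{ intervals in }\mathbb N\right\},$$ and let $Z$ be the completion of $c_{00}$ under this norm. *)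

From HB Require Import structures.
From mathcomp Require Import all_boot all_order all_algebra.
From mathcomp Require Import all_classical all_reals all_analysis.
Set Implicit Arguments. Unset Strict Implicit. Unset Printing Implicit Defensive.
Import Order.TTheory GRing.Theory Num.Theory.
Import numFieldNormedType.Exports.
Local Open Scope classical_set_scope.
Local Open Scope ring_scope.

Section Defs.
Variable R : realType.

Definition bpsum (V : normedModType R) (a : nat -> R) (v : nat -> V) (n : nat) : V :=
  \sum_(i < n) a i *: v i.

Definition ban_separable (V : normedModType R) : Prop :=
  exists D : nat -> V, forall y : V, forall eps : R, 0 < eps ->
    exists n, `|y - D n| < eps.

Definition ban_schauder_basis (V : normedModType R) (v : nat -> V) : Prop :=
  forall y : V, exists! a : nat -> R, bpsum a v @ \oo --> y.

Definition ban_normalized (V : normedModType R) (v : nat -> V) : Prop :=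
  forall n, `|v n| = 1.

Definition ban_one_unconditional (V : normedModType R) (v : nat -> V) : Prop :=
  forall (n : nat) (a : nat -> R) (s : nat -> bool),
    `|\sum_(i < n) ((-1) ^+ s i * a i) *: v i| = `|\sum_(i < n) a i *: v i|.

Definition ban_monotone (V : normedModType R) (v : nat -> V) : Prop :=
  forall (a : nat -> R) (m n : nat), (m <= n)%N -> `|bpsum a v m| <= `|bpsum a v n|.

Definition ban_boundedly_complete (V : normedModType R) (v : nat -> V) : Prop :=
  forall a : nat -> R, (exists M : R, forall n, `|bpsum a v n| <= M) ->
    exists l : V, bpsum a v @ \oo --> l.

Definition ban_quotient_map (V W : normedModType R) (Q : V -> W) : Prop :=
  forall y : W, (exists z, Q z = y) /\
    `|y| = inf [set `|z| | z in [set z | Q z = y]].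

(* Finite families of intervals I_1 < ... < I_k in N, coded as lists of pairs
   (min I_j, max I_j). *)
Definition ban_admissible (s : seq (nat * nat)) : bool :=
  all (fun p => (p.1 <= p.2)%N) s && sorted (fun p q => (p.2 < q.1)%N) s.

Definition block_vec (X U : normedModType R) (x : nat -> X) (u : nat -> U)
  (a : nat -> R) (s : seq (nat * nat)) : U :=
  \sum_(p <- s) `|\sum_(p.1 <= i < p.2.+1) a i *: x i| *: u p.1.

(* the norm ||a||_Z on c00 (the max, written as a sup) *)
Definition Znorm (X U : normedModType R) (x : nat -> X) (u : nat -> U)
  (a : nat -> R) : R :=
  sup [set `|block_vec x u a s| | s in [set s | ban_admissible s]].

End Defs.

From HB Require Import structures.
From mathcomp Require Import all_boot all_order all_algebra.
From mathcomp Require Import all_classical all_reals all_analysis.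
From mathcomp Require Import zify ring lra.
Set Implicit Arguments. Unset Strict Implicit. Unset Printing Implicit Defensive.
Import Order.TTheory GRing.Theory Num.Theory.
Import numFieldNormedType.Exports.
Local Open Scope classical_set_scope.
Local Open Scope ring_scope.

(* Testing the norm of Z on a single interval gives |sum a_i x_i| <= |sum a_i e_i|,
   so e_i |-> x_i extends to a contraction Q; clipping families of intervals to an
   initial segment shows that (e_i) is monotone, and the coordinate functionals and
   basis projections, bounded on the span of (e_i), extend to Z and make (e_i) a
   basis. Since {+-x_n} is dense in the sphere, a greedy algorithm writes y as
   sum_k c_k x_(n_k) with |c_0| <= |y| and geometrically decreasing c_k, and
   sum_k c_k e_(n_k) lifts y with norm at most |y| + eps. Finally, if the partial
   sums of sum a_i e_i are bounded but not Cauchy, there are infinitely many disjoint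
   groups of intervals whose block vectors have norm >= eps/4; these vectors are
   disjointly supported in (u_j) with bounded partial sums, which contradicts the
   bounded completeness of (u_j). *)

Section NormedSeq.
Variable R : realType.

Lemma cvg_seq_distP (W : normedModType R) (s : nat -> W) (l : W) :
  s @ \oo --> l <->
  forall eps : R, 0 < eps -> exists N, forall n, (N <= n)%N -> `|l - s n| < eps.
Proof.
split=> [/cvgrPdist_lt cvg_s eps eps_gt0 | near_l].
  by have [N _ sN] := cvg_s eps eps_gt0; exists N.
by apply/cvgrPdist_lt => eps /near_l[N sN]; exists N.
Qed.

Lemma cauchy_seq_cvg (W : completeNormedModType R) (s : nat -> W) :
  (forall eps : R, 0 < eps -> exists N, forall n, (N <= n)%N -> `|s N - s n| < eps) ->
  exists l : W, s @ \oo --> l.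
Proof.
move=> cauchy_s; have : cvg (s @ \oo).
  apply: (@cauchy_cvg W (s @ \oo)); apply: cauchy_exP => eps /cauchy_s[N sN].
  by exists (s N), N => // n /= /sN; rewrite -ball_normE.
by exists (lim (s @ \oo)).
Qed.

Lemma norm_le_eps_eq0 (W : normedModType R) (w : W) :
  (forall eps : R, 0 < eps -> `|w| <= eps) -> w = 0.
Proof.
move=> small_w; apply/normr0_eq0/eqP; rewrite eq_le normr_ge0 andbT.
by apply/ler_addgt0Pr => eps /small_w; rewrite add0r.
Qed.

Lemma norm_le_scale_eps_eq0 (W : normedModType R) (w : W) (K : R) : 0 <= K ->
  (forall eps : R, 0 < eps -> `|w| <= K * eps) -> w = 0.
Proof.
move=> K_ge0 small_w; apply: norm_le_eps_eq0 => eps eps_gt0.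
have K1_gt0 : 0 < K + 1 by rewrite ltr_pwDr.
apply: le_trans (small_w (eps / (K + 1)) _) _; first by rewrite divr_gt0.
by rewrite mulrCA ler_piMr ?ltW // ltr_pdivrMr // mul1r ltrDl.
Qed.

Lemma invSn_lt (d : R) : 0 < d -> exists N, forall k, (N <= k)%N -> k.+1%:R^-1 < d.
Proof.
move=> d_gt0; exists (Num.Def.archi_bound d^-1) => k kN.
rewrite invf_plt ?posrE ?ltr0Sn //.
apply: lt_le_trans (archi_boundP _) _; first by rewrite invr_ge0 ltW.
by rewrite ler_nat ltnW.
Qed.

Lemma sum_half_pow (N m : nat) :
  \sum_(N.+1 <= j < (N + m).+1) (2^-1 : R) ^+ j = 2^-1 ^+ N - 2^-1 ^+ (N + m).
Proof.
elim: m => [|m IHm]; first by rewrite addn0 big_geq // subrr.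
rewrite addnS big_nat_recr /= ?ltnS ?leq_addr // IHm exprS.
by set t := (2^-1 : R) ^+ (N + m); set s := (2^-1 : R) ^+ N; field.
Qed.

Lemma half_pow_lt (d : R) : 0 < d -> exists N, forall k, (N <= k)%N -> 2^-1 ^+ k < d.
Proof.
move=> /invSn_lt[N N_small]; exists N => k /N_small; apply: le_lt_trans.
rewrite exprVn lef_pV2 ?posrE ?exprn_gt0 ?ltr0Sn // -natrX ler_nat.
exact: ltn_expl.
Qed.

End NormedSeq.

Definition ivl_wf (p : nat * nat) : bool := (p.1 <= p.2)%N.
Definition ivl_lt (p q : nat * nat) : bool := (p.2 < q.1)%N.
Definition ivls_within (n m : nat) (s : seq (nat * nat)) : bool :=
  all (fun p => (n <= p.1)%N && (p.2 < m)%N) s.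

Lemma admissibleE (s : seq (nat * nat)) :
  ban_admissible s = all ivl_wf s && pairwise ivl_lt s.
Proof.
rewrite /ban_admissible; case wf_s: (all ivl_wf s) => //=.
apply: (sorted_pairwise_in (P := ivl_wf)) wf_s.
by move=> q p r q_wf _ _; rewrite unfold_in /ivl_wf /ivl_lt in q_wf *; lia.
Qed.

Lemma admissible_cat s1 s2 m1 n2 m2 :
  ban_admissible s1 -> ivls_within 0 m1 s1 ->
  ban_admissible s2 -> ivls_within n2 m2 s2 -> (m1 <= n2 <= m2)%N ->
  ban_admissible (s1 ++ s2) && ivls_within 0 m2 (s1 ++ s2).
Proof.
rewrite !admissibleE /ivls_within => /andP[wf1 lt1] in1 /andP[wf2 lt2] in2 /andP[m1n2 n2m2].
rewrite !all_cat wf1 wf2 pairwise_cat lt1 lt2 /= andbT.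
apply/and3P; split.
- apply/allrelP => p q /(allP in1)/andP[_ p2] /(allP in2)/andP[q1 _]; rewrite /ivl_lt; lia.
- by apply/allP => p /(allP in1)/andP[_ p2]; lia.
- by apply/allP => p /(allP in2)/andP[_ p2]; lia.
Qed.

Lemma big_nat_widen_cond (V : nmodType) (F : nat -> V) lo hi K : (hi <= K)%N ->
  \sum_(lo <= i < hi) F i = \sum_(0 <= i < K | (lo <= i < hi)%N) F i.
Proof.
move=> hiK; rewrite (big_nat_widen _ _ _ _ _ hiK) (big_nat_widenl _ _ _ _ _ (leq0n lo)).
by apply: eq_bigl => i /=; lia.
Qed.

Section Restrict.
Variable R : realType.

Definition restrict (n0 n : nat) (a : nat -> R) (i : nat) : R :=
  if (n0 <= i < n)%N then a i else 0.

Lemma sum_restrict (V : lmodType R) (v : nat -> V) a n0 n lo hi :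
  \sum_(lo <= i < hi) restrict n0 n a i *: v i = \sum_(maxn lo n0 <= i < minn hi n) a i *: v i.
Proof.
rewrite (big_nat_widen_cond _ _ (leqnn hi)) (big_nat_widen_cond _ _ (geq_minl hi n)).
rewrite [LHS]big_mkcond [RHS]big_mkcond; apply: eq_bigr => i _ /=.
have -> : (maxn lo n0 <= i < minn hi n)%N = (lo <= i < hi)%N && (n0 <= i < n)%N by lia.
by rewrite /restrict; case: (lo <= i < hi)%N; case: (n0 <= i < n)%N; rewrite ?scale0r.
Qed.

Variable V : normedModType R.
Implicit Types (v : nat -> V) (a b : nat -> R).

Lemma eq_bpsum a b v n : (forall i, (i < n)%N -> a i = b i) -> bpsum a v n = bpsum b v n.
Proof. by move=> ab; apply: eq_bigr => i _; rewrite ab. Qed.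

Lemma bpsumE a v n : bpsum a v n = \sum_(0 <= i < n) a i *: v i.
Proof. by rewrite /bpsum big_mkord. Qed.

Lemma bpsum_restrict a v n K : bpsum (restrict 0 n a) v K = bpsum a v (minn n K).
Proof. by rewrite !bpsumE sum_restrict maxnn minnC. Qed.

Lemma bpsum_restrictl a v n K : (n <= K)%N -> bpsum a v n = bpsum (restrict 0 n a) v K.
Proof. by move=> nK; rewrite bpsum_restrict (minn_idPl nK). Qed.

Lemma bpsumD a b v n : bpsum (fun i => a i + b i) v n = bpsum a v n + bpsum b v n.
Proof. by rewrite /bpsum -big_split; apply: eq_bigr => i _; rewrite scalerDl. Qed.

Lemma bpsumZ c a v n : bpsum (fun i => c * a i) v n = c *: bpsum a v n.
Proof. by rewrite /bpsum scaler_sumr; apply: eq_bigr => i _; rewrite scalerA. Qed.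

Lemma bpsumB a b v n : bpsum (fun i => a i - b i) v n = bpsum a v n - bpsum b v n.
Proof. by rewrite /bpsum -sumrB; apply: eq_bigr => i _; rewrite scalerBl. Qed.

Lemma bpsumS a v n : bpsum a v n.+1 = bpsum a v n + a n *: v n.
Proof. by rewrite /bpsum big_ord_recr. Qed.

Lemma bpsum_delta v n : bpsum (fun i => (i == n)%:R) v n.+1 = v n.
Proof.
rewrite bpsumS eqxx scale1r /bpsum big1 ?add0r // => i _.
by rewrite (ltn_eqF (ltn_ord i)) scale0r.
Qed.

Lemma bpsum_sub_restrict a v N n : (N <= n)%N ->
  bpsum a v n - bpsum a v N = bpsum (restrict N n a) v n.
Proof.
move=> Nn; rewrite !bpsumE sum_restrict max0n minnn (big_cat_nat (leq0n N) Nn) /=.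
by rewrite addrAC subrr add0r.
Qed.

Lemma norm_bpsum_le_l1 a v n : ban_normalized v -> `|bpsum a v n| <= \sum_(i < n) `|a i|.
Proof.
move=> v_normalized; apply: le_trans (ler_norm_sum _ _ _) _.
by apply: ler_sum => i _; rewrite normrZ v_normalized mulr1.
Qed.

End Restrict.

Section BlockVectors.
Variable R : realType.
Variables (X U : normedModType R) (x : nat -> X) (u : nat -> U).
Hypotheses (x_normalized : ban_normalized x) (u_normalized : ban_normalized u).

Lemma block_vec_cat (a : nat -> R) s1 s2 :
  block_vec x u a (s1 ++ s2) = block_vec x u a s1 + block_vec x u a s2.
Proof. by rewrite /block_vec big_cat. Qed.

Lemma block_vec_restrict (a : nat -> R) n m L s : ivls_within n m s -> (m <= L)%N ->
  block_vec x u (restrict 0 L a) s = block_vec x u a s.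
Proof.
move=> s_in mL; rewrite /block_vec !big_seq; apply: eq_bigr => p /(allP s_in)/andP[_ p2].
by rewrite sum_restrict maxn0 (minn_idPl _) //; lia.
Qed.

Lemma norm_block_le (a : nat -> R) n0 n (p : nat * nat) :
  `|\sum_(p.1 <= i < p.2.+1) restrict n0 n a i *: x i| <=
  \sum_(0 <= i < n) (if (p.1 <= i <= p.2)%N then `|a i| else 0).
Proof.
rewrite sum_restrict; apply: le_trans (ler_norm_sum _ _ _) _.
under eq_bigr => i _ do rewrite normrZ x_normalized mulr1.
rewrite (big_nat_widen_cond _ _ (geq_minr p.2.+1 n)) [X in X <= _]big_mkcond /=.
apply: ler_sum => i _; case: ifPn => [i_in|_]; last by case: ifP.
by rewrite ifT //; lia.
Qed.

Lemma sum_disjoint_ivls_le (c : R) i (s : seq (nat * nat)) : 0 <= c -> pairwise ivl_lt s ->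
  \sum_(p <- s) (if (p.1 <= i <= p.2)%N then c else 0) <= c.
Proof.
move=> c_ge0; elim: s => [|p s IHs]; first by rewrite big_nil.
rewrite /= big_cons => /andP[p_lt s_lt]; case: ifP => i_p; last by rewrite add0r IHs.
rewrite big1_seq ?addr0 // => q /andP[_ /(allP p_lt)]; rewrite /ivl_lt => pq.
by rewrite ifF //; lia.
Qed.

Lemma norm_block_vec_le_l1 (a : nat -> R) n0 n s : pairwise ivl_lt s ->
  `|block_vec x u (restrict n0 n a) s| <= \sum_(0 <= i < n) `|a i|.
Proof.
move=> s_lt; apply: le_trans (ler_norm_sum _ _ _) _.
under eq_bigr => p _ do rewrite normrZ u_normalized mulr1 normr_id.
apply: le_trans (ler_sum _ (fun p _ => norm_block_le a n0 n p)) _.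
by rewrite exchange_big; apply: ler_sum => i _; apply: sum_disjoint_ivls_le.
Qed.

(* [Znorm] is a [sup], known to be finite only for finitely supported sequences;
   hence the estimates are stated for [restrict n0 n a]. *)
Let block_norms (a : nat -> R) := [set `|block_vec x u a s| | s in [set s | ban_admissible s]].

Lemma block_norms_bounded (a : nat -> R) n0 n :
  has_ubound (block_norms (restrict n0 n a)) /\ block_norms (restrict n0 n a) !=set0.
Proof.
split; last by exists `|block_vec x u (restrict n0 n a) [::]|, [::].
exists (\sum_(0 <= i < n) `|a i|) => _ [s /= s_adm <-].
by apply: norm_block_vec_le_l1; move: s_adm; rewrite admissibleE => /andP[].
Qed.

Lemma Znorm_le_l1 (a : nat -> R) n0 n : Znorm x u (restrict n0 n a) <= \sum_(0 <= i < n) `|a i|.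
Proof.
have [_ ne] := block_norms_bounded a n0 n; apply: ge_sup ne _ => _ [s /= s_adm <-].
by apply: norm_block_vec_le_l1; move: s_adm; rewrite admissibleE => /andP[].
Qed.

Lemma norm_block_vec_le_Znorm (a : nat -> R) n0 n s : ban_admissible s ->
  `|block_vec x u (restrict n0 n a) s| <= Znorm x u (restrict n0 n a).
Proof.
by move=> s_adm; apply: (ub_le_sup (block_norms_bounded a n0 n).1); exists s.
Qed.

Lemma Znorm_ge0 (a : nat -> R) n0 n : 0 <= Znorm x u (restrict n0 n a).
Proof. exact: le_trans (norm_block_vec_le_Znorm a n0 n (s := [::]) erefl). Qed.

(* Restricting a family of blocks to [n0, m): the blocks starting inside are
   clipped at m - 1, and the (at most one) block straddling n0 is cut at n0. *)
Definition clip_inner n0 m (s : seq (nat * nat)) :=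
  map (fun p => (p.1, minn p.2 m.-1)) (seq.filter (fun p => (n0 <= p.1 < m)%N) s).
Definition clip_straddle n0 m (s : seq (nat * nat)) :=
  map (fun p => (n0, minn p.2 m.-1)) (seq.filter (fun p => (p.1 < n0 <= p.2)%N) s).

Lemma clip_inner_admissible n0 m s : ban_admissible s ->
  ban_admissible (clip_inner n0 m s) && ivls_within n0 m (clip_inner n0 m s).
Proof.
rewrite !admissibleE /clip_inner /ivls_within !all_map => /andP[s_wf s_lt].
rewrite -andbA; apply/and3P; split.
- by apply/allP => p; rewrite mem_filter => /andP[p_in /(allP s_wf)]; rewrite /ivl_wf /=; lia.
- rewrite pairwise_map; apply/pairwise_filter/(sub_pairwise _ s_lt) => p q.
  by rewrite /ivl_lt /=; lia.
- by apply/allP => p; rewrite mem_filter /=; lia.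
Qed.

Lemma clip_straddle_admissible n0 m s : (n0 < m)%N -> ban_admissible s ->
  ban_admissible (clip_straddle n0 m s) && ivls_within n0 m (clip_straddle n0 m s).
Proof.
move=> n0m; rewrite !admissibleE /clip_straddle /ivls_within !all_map => /andP[_ s_lt].
rewrite -andbA; apply/and3P; split.
- by apply/allP => p; rewrite mem_filter /ivl_wf /=; lia.
- rewrite pairwise_map.
  apply: (sub_in_pairwise (P := fun p => (p.1 < n0 <= p.2)%N)) (pairwise_filter _ s_lt).
    by move=> p q; rewrite /in_mem /ivl_lt /=; lia.
  by apply/allP => p; rewrite mem_filter => /andP[].
- by apply/allP => p; rewrite mem_filter /=; lia.
Qed.

Lemma norm_block_vec_clip (a : nat -> R) n0 m L s : (n0 < m)%N -> (m <= L)%N ->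
  `|block_vec x u (restrict n0 m a) s| <=
  `|block_vec x u (restrict 0 L a) (clip_inner n0 m s)| +
  `|block_vec x u (restrict 0 L a) (clip_straddle n0 m s)|.
Proof.
move=> n0m mL; rewrite /block_vec.
under eq_bigr => p _ do rewrite sum_restrict.
rewrite (bigID (fun p => (n0 <= p.1)%N)) /=.
apply: le_trans (ler_normD _ _) _; apply: lerD.
  rewrite /clip_inner big_map big_filter (bigID (fun p => (p.1 < m)%N)) /=.
  rewrite [X in _ + X]big1 ?addr0 => [|p /andP[_ pm]]; last first.
    by rewrite big_geq ?normr0 ?scale0r //; lia.
  rewrite le_eqVlt; apply/orP; left; apply/eqP; congr `|_|.
  apply: eq_big => [p|p /andP[n0p pm]]; first by lia.
  by rewrite sum_restrict /=; congr (`|_| *: _); congr (\sum_(_ <= _ < _) _); lia.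
rewrite (bigID (fun p => (n0 <= p.2)%N)) /=.
rewrite [X in _ + X]big1 ?addr0 => [|p /andP[_ pn0]]; last first.
  by rewrite big_geq ?normr0 ?scale0r //; lia.
apply: le_trans (ler_norm_sum _ _ _) _.
rewrite (eq_bigr (fun p => `|\sum_(maxn p.1 n0 <= i < minn p.2.+1 m) a i *: x i|)); last first.
  by move=> p _; rewrite normrZ u_normalized mulr1 normr_id.
rewrite /clip_straddle big_map big_filter /= -scaler_suml normrZ u_normalized mulr1.
rewrite ger0_norm ?sumr_ge0 // le_eqVlt; apply/orP; left; apply/eqP.
apply: eq_big => [p|p /andP[p1 p2]]; first by rewrite /=; lia.
by rewrite sum_restrict /=; congr `|_|; congr (\sum_(_ <= _ < _) _); lia.
Qed.

End BlockVectors.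

Section UnitVectors.
Variable R : realType.
Variables (X U Z : normedModType R) (x : nat -> X) (u : nat -> U) (e : nat -> Z).
Hypotheses (x_normalized : ban_normalized x) (u_normalized : ban_normalized u).
Hypothesis norm_bpsum_e : forall n a, `|bpsum a e n| = Znorm x u (restrict 0 n a).

Lemma norm_bpsum_x_le a n : `|bpsum a x n| <= `|bpsum a e n|.
Proof.
case: n => [|n]; first by rewrite /bpsum !big_ord0 !normr0.
rewrite norm_bpsum_e; apply: le_trans (norm_block_vec_le_Znorm x_normalized u_normalized
  a 0 n.+1 (s := [:: (0, n)%N]) _); last by rewrite admissibleE.
rewrite /block_vec big_seq1 normrZ u_normalized mulr1 normr_id sum_restrict /=.
by rewrite maxnn minnn bpsumE.
Qed.

Lemma monotone_e : ban_monotone e.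
Proof.
move=> a [|m] n mn; rewrite !norm_bpsum_e.
  apply: le_trans (Znorm_le_l1 x_normalized u_normalized a 0 0) _.
  by rewrite big_geq // (Znorm_ge0 x_normalized u_normalized).
have [_ ne] := block_norms_bounded x_normalized u_normalized a 0 m.+1.
apply: ge_sup ne _ => _ [s /= s_adm <-].
apply: le_trans (norm_block_vec_clip x u_normalized a s (ltn0Sn m) mn) _.
have -> : block_vec x u (restrict 0 n a) (clip_straddle 0 m.+1 s) = 0.
  by rewrite /block_vec /clip_straddle big_map big_filter big_pred0.
rewrite normr0 addr0; have /andP[s_adm' _] := clip_inner_admissible 0 m.+1 s_adm.
exact: norm_block_vec_le_Znorm.
Qed.

Lemma normalized_e : ban_normalized e.
Proof.
move=> n; apply/eqP; rewrite eq_le; apply/andP; split.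
  rewrite -(bpsum_delta e n) norm_bpsum_e.
  apply: le_trans (Znorm_le_l1 x_normalized u_normalized _ 0 n.+1) _.
  rewrite big_nat_recr //= eqxx normr1 big1_seq ?add0r // => i /andP[_].
  by rewrite mem_index_iota => /andP[_ /ltn_eqF->]; rewrite normr0.
by rewrite -{1}(x_normalized n) -(bpsum_delta x n) -(bpsum_delta e n) norm_bpsum_x_le.
Qed.

Lemma norm_coef_le a n i : (i < n)%N -> `|a i| <= 2 * `|bpsum a e n|.
Proof.
move=> i_lt_n.
have -> : `|a i| = `|bpsum a e i.+1 - bpsum a e i|.
  by rewrite bpsumS addrAC subrr add0r normrZ normalized_e mulr1.
apply: le_trans (ler_normB _ _) _.
by rewrite mulr2n mulrDl mul1r lerD // monotone_e // ltnW.
Qed.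

Lemma norm_bpsum_sub_e a N n : (N <= n)%N ->
  `|bpsum a e n - bpsum a e N| = Znorm x u (restrict N n a).
Proof.
move=> Nn; rewrite bpsum_sub_restrict // norm_bpsum_e; congr Znorm.
by apply: funext => i; rewrite /restrict; case: (ltnP i n); rewrite ?andbF.
Qed.

End UnitVectors.

Section ExtendFromSpan.
Variable R : realType.
Variables (Z : normedModType R) (W : completeNormedModType R) (e : nat -> Z).
Hypothesis span_dense : forall (z : Z) (eps : R), 0 < eps ->
  exists (n : nat) (a : nat -> R), `|z - bpsum a e n| < eps.
Variables (F : (nat -> R) -> nat -> W) (C : R).
Hypothesis C_ge0 : 0 <= C.
Hypothesis F_restrict : forall a n N, (n <= N)%N -> F a n = F (restrict 0 n a) N.
Hypothesis F_linear : forall c a b n, F (fun i => c * a i + b i) n = c *: F a n + F b n.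
Hypothesis F_bounded : forall a n, `|F a n| <= C * `|bpsum a e n|.

Lemma span_map_sub a b n : F (fun i => a i - b i) n = F a n - F b n.
Proof.
have := F_linear (-1) b a n; rewrite scaleN1r addrC => <-.
by congr F; apply: funext => i; rewrite mulN1r addrC.
Qed.

Lemma span_map_lipschitz a n b m : `|F a n - F b m| <= C * `|bpsum a e n - bpsum b e m|.
Proof.
rewrite (F_restrict a (leq_maxl n m)) (F_restrict b (leq_maxr n m)) -span_map_sub.
by rewrite (bpsum_restrictl a e (leq_maxl n m)) (bpsum_restrictl b e (leq_maxr n m)) -bpsumB.
Qed.

Lemma span_map_near z a n b m :
  `|F a n - F b m| <= C * `|z - bpsum a e n| + C * `|z - bpsum b e m|.
Proof.
apply: le_trans (span_map_lipschitz a n b m) _; rewrite -mulrDr ler_wpM2l //.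
by apply: le_trans (ler_distD z _ _) _; rewrite distrC.
Qed.

Lemma extension_at (z : Z) : exists w : W, forall a n, `|w - F a n| <= C * `|z - bpsum a e n|.
Proof.
have C1_gt0 : 0 < C + 1 by rewrite ltr_pwDr.
have approx k : exists p : nat * (nat -> R), C * `|z - bpsum p.2 e p.1| < k.+1%:R^-1.
  have [|n [a za]] := span_dense z (eps := k.+1%:R^-1 / (C + 1)).
    by rewrite divr_gt0 ?invr_gt0.
  exists (n, a) => /=; apply: (@le_lt_trans _ _ ((C + 1) * `|z - bpsum a e n|)).
    by rewrite ler_wpM2r // lerDl.
  by rewrite mulrC -ltr_pdivlMr.
have [g g_approx] := choice approx.
pose Fg k := F (g k).2 (g k).1.
have [w Fg_w] : exists w : W, Fg @ \oo --> w.
  apply: cauchy_seq_cvg => eps eps_gt0.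
  have [N N_small] := invSn_lt (divr_gt0 eps_gt0 (ltr0Sn _ 1)).
  exists N => k kN; apply: le_lt_trans (span_map_near z _ _ _ _) _.
  by rewrite [eps]splitr ltrD // (lt_trans (g_approx _)) ?N_small.
exists w => a n; apply/ler_addgt0Pr => eps eps_gt0.
have [K w_near] := (cvg_seq_distP _ _).1 Fg_w _ (divr_gt0 eps_gt0 (ltr0Sn _ 1)).
have [N N_small] := invSn_lt (divr_gt0 eps_gt0 (ltr0Sn _ 1)).
pose k := maxn K N.
have w_k : `|w - Fg k| < eps / 2 by rewrite w_near ?leq_maxl.
have g_k : C * `|z - bpsum (g k).2 e (g k).1| < eps / 2.
  by rewrite (lt_trans (g_approx k)) ?N_small ?leq_maxr.
have := ler_distD (Fg k) w (F a n); have := span_map_near z (g k).2 (g k).1 a n.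
rewrite /Fg in w_k *; lra.
Qed.

Lemma extension_exists :
  exists f : Z -> W, forall z a n, `|f z - F a n| <= C * `|z - bpsum a e n|.
Proof. by have [f f_near] := choice extension_at; exists f. Qed.

Variable f : Z -> W.
Hypothesis f_near : forall z a n, `|f z - F a n| <= C * `|z - bpsum a e n|.

Lemma extension_bpsum a n : f (bpsum a e n) = F a n.
Proof.
apply/eqP; rewrite -subr_eq0 -normr_eq0 eq_le normr_ge0 andbT.
by have := f_near (bpsum a e n) a n; rewrite subrr normr0 mulr0.
Qed.

Lemma extension_bounded z : `|f z| <= C * `|z|.
Proof.
have F0 : F (fun=> 0) 0 = 0.
  by rewrite -(subrr (F (fun=> 0) 0)) -span_map_sub; congr F; apply: funext => i; rewrite subrr.
by have := f_near z (fun=> 0) 0; rewrite F0 subr0 /bpsum big_ord0 subr0.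
Qed.

Lemma extension_linear : linear f.
Proof.
move=> c z1 z2; apply/subr0_eq/(norm_le_scale_eps_eq0 (K := 2 * C * (`|c| + 1))).
  by rewrite !mulr_ge0.
move=> eta eta_gt0.
have [n1 [a1 z1a1]] := span_dense z1 eta_gt0.
have [n2 [a2 z2a2]] := span_dense z2 eta_gt0.
pose b i := c * restrict 0 n1 a1 i + restrict 0 n2 a2 i; pose N := maxn n1 n2.
have bpsum_b : bpsum b e N = c *: bpsum a1 e n1 + bpsum a2 e n2.
  by rewrite bpsumD bpsumZ -!bpsum_restrictl ?leq_maxl ?leq_maxr.
have F_b : F b N = c *: F a1 n1 + F a2 n2.
  by rewrite F_linear -!F_restrict ?leq_maxl ?leq_maxr.
have near1 : `|f z1 - F a1 n1| <= C * eta.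
  by apply: le_trans (f_near _ _ _) _; apply: ler_wpM2l => //; exact: ltW.
have near2 : `|f z2 - F a2 n2| <= C * eta.
  by apply: le_trans (f_near _ _ _) _; apply: ler_wpM2l => //; exact: ltW.
have near12 : `|f (c *: z1 + z2) - F b N| <= C * (`|c| * eta + eta).
  apply: le_trans (f_near _ _ _) _; apply: ler_wpM2l => //.
  rewrite bpsum_b opprD addrACA -scalerBr.
  apply: le_trans (ler_normD _ _) _; apply: lerD; last exact: ltW.
  by rewrite normrZ; apply: ler_wpM2l => //; exact: ltW.
have split_diff : F b N - (c *: f z1 + f z2) = c *: (F a1 n1 - f z1) + (F a2 n2 - f z2).
  by rewrite F_b opprD addrACA -scalerBr.
apply: le_trans (ler_distD (F b N) _ _) _.
rewrite split_diff; apply: le_trans (lerD (lexx _) (ler_normD _ _)) _.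
rewrite normrZ !(distrC (F _ _)).
have := ler_wpM2l (normr_ge0 c) near1; have := normr_ge0 c; lra.
Qed.

End ExtendFromSpan.

Section SchauderBasis.
Variable R : realType.
Variables (X U : normedModType R) (Z : completeNormedModType R).
Variables (x : nat -> X) (u : nat -> U) (e : nat -> Z).
Hypotheses (x_normalized : ban_normalized x) (u_normalized : ban_normalized u).
Hypothesis norm_bpsum_e : forall n a, `|bpsum a e n| = Znorm x u (restrict 0 n a).
Hypothesis span_dense : forall (z : Z) (eps : R), 0 < eps ->
  exists (n : nat) (a : nat -> R), `|z - bpsum a e n| < eps.

Let e_normalized := normalized_e x_normalized u_normalized norm_bpsum_e.
Let e_monotone := monotone_e x_normalized u_normalized norm_bpsum_e.

Lemma coef_functionals : exists cf : nat -> Z -> R,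
  forall i z a n, `|cf i z - restrict 0 n a i| <= 2 * `|z - bpsum a e n|.
Proof.
have cf_i i : exists f : Z -> R,
    forall z a n, `|f z - restrict 0 n a i| <= 2 * `|z - bpsum a e n|.
  apply: (extension_exists span_dense) => //.
  - by move=> a n N nN; rewrite /restrict; case: ltnP => [/leq_trans/(_ nN)->|] //; case: ltnP.
  - by move=> c a b n; rewrite /restrict; case: ifP; rewrite ?scaler0 ?addr0.
  - move=> a n; rewrite /restrict; case: ifP => [/andP[_ i_lt_n] | _].
      exact: (norm_coef_le x_normalized u_normalized norm_bpsum_e).
    by rewrite normr0 mulr_ge0.
by have [cf cf_near] := choice cf_i; exists cf.
Qed.

Lemma basis_projections : exists P : nat -> Z -> Z,
  forall m z a n, `|P m z - bpsum a e (minn m n)| <= `|z - bpsum a e n|.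
Proof.
have P_m m : exists f : Z -> Z,
    forall z a n, `|f z - bpsum a e (minn m n)| <= 1 * `|z - bpsum a e n|.
  apply: (extension_exists span_dense) => //.
  - by move=> a n N nN; rewrite bpsum_restrict; congr bpsum; lia.
  - by move=> c a b n; rewrite bpsumD bpsumZ.
  - by move=> a n; rewrite mul1r e_monotone // geq_minr.
have [P P_near] := choice P_m; exists P => m z a n.
by rewrite -[X in _ <= X]mul1r.
Qed.

Section Coordinates.
Variables (cf : nat -> Z -> R) (P : nat -> Z -> Z).
Hypothesis cf_near : forall i z a n, `|cf i z - restrict 0 n a i| <= 2 * `|z - bpsum a e n|.
Hypothesis P_near : forall m z a n, `|P m z - bpsum a e (minn m n)| <= `|z - bpsum a e n|.

Lemma bpsum_coef z m : bpsum (fun i => cf i z) e m = P m z.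
Proof.
apply/subr0_eq/(norm_le_scale_eps_eq0 (K := 1 + 2 * m%:R)); first by rewrite addr_ge0.
move=> eta /(span_dense z)[n [a /ltW za]].
have coef_close : `|bpsum (fun i => cf i z) e m - bpsum (restrict 0 n a) e m| <= 2 * m%:R * eta.
  rewrite -bpsumB; apply: le_trans (norm_bpsum_le_l1 _ _ e_normalized) _.
  apply: le_trans (ler_sum _ (fun (i : 'I_m) _ => cf_near i z a n)) _.
  by rewrite sumr_const card_ord -[_ *+ m]mulr_natr mulrAC; apply: ler_wpM2l.
apply: le_trans (ler_distD (bpsum (restrict 0 n a) e m) _ _) _.
rewrite bpsum_restrict minnC in coef_close *; rewrite mulrDl mul1r addrC.
apply: lerD => //; rewrite distrC; exact: le_trans (P_near _ _ _ _) za.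
Qed.

Lemma bpsum_coef_cvg z : bpsum (fun i => cf i z) e @ \oo --> z.
Proof.
apply/cvg_seq_distP => eps eps_gt0.
have [n [a za]] := span_dense z (divr_gt0 eps_gt0 (ltr0Sn _ 1)).
exists n => m nm; rewrite bpsum_coef.
have := P_near m z a n; rewrite (minn_idPr nm) => P_close.
apply: le_lt_trans (ler_distD (bpsum a e n) _ _) _.
by rewrite [eps]splitr ltrD // distrC (le_lt_trans P_close).
Qed.

Lemma coef_unique z b : bpsum b e @ \oo --> z -> b = (fun i => cf i z).
Proof.
move=> /cvg_seq_distP b_cvg; apply: funext => i; apply/eqP; rewrite eq_sym -subr_eq0.
apply/eqP/norm_le_eps_eq0 => eps eps_gt0.
have [N zN] := b_cvg _ (divr_gt0 eps_gt0 (ltr0Sn _ 1)).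
pose m := maxn N i.+1; have := cf_near i z b m.
rewrite /restrict (_ : (0 <= i < m)%N) ?leq_maxr // => cf_close.
apply: le_trans cf_close _; rewrite -ler_pdivlMl // mulrC.
by apply/ltW/zN; rewrite leq_maxl.
Qed.

End Coordinates.

Lemma schauder_basis_e : ban_schauder_basis e.
Proof.
have [cf cf_near] := coef_functionals; have [P P_near] := basis_projections.
move=> z; exists (fun i => cf i z); split; first exact: bpsum_coef_cvg cf_near P_near z.
by move=> b /(coef_unique cf_near).
Qed.

End SchauderBasis.

Section Lifting.
Variable R : realType.
Variables (X Z : completeNormedModType R) (x : nat -> X) (e : nat -> Z).
Hypothesis e_normalized : ban_normalized e.
Hypothesis x_sphere_dense : forall y : X, `|y| = 1 -> forall eps : R, 0 < eps ->
  exists n, `|y - x n| < eps \/ `|y + x n| < eps.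

Lemma approx_by_basis_vector (r : X) (eps : R) : 0 < eps ->
  exists (c : R) (n : nat), `|c| <= `|r| /\ `|r - c *: x n| < eps.
Proof.
move=> eps_gt0; have [->|r_neq0] := eqVneq r 0.
  by exists 0, 0%N; rewrite scale0r subr0 !normr0.
have r_gt0 : 0 < `|r| by rewrite normr_gt0.
have r_unit : `| `|r|^-1 *: r| = 1 by rewrite normrZ normfV normr_id mulVf ?gt_eqF.
have r_scale : r = `|r| *: (`|r|^-1 *: r) by rewrite scalerA divff ?scale1r ?gt_eqF.
have [n [close|close]] := x_sphere_dense r_unit (divr_gt0 eps_gt0 r_gt0).
  exists `|r|, n; split; first by rewrite normr_id.
  by rewrite {1}r_scale -scalerBr normrZ normr_id -ltr_pdivlMl // mulrC.
exists (- `|r|), n; split; first by rewrite normrN normr_id.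
by rewrite {1}r_scale scaleNr opprK -scalerDr normrZ normr_id -ltr_pdivlMl // mulrC.
Qed.

Lemma greedy_expansion (y : X) (d : R) : 0 < d ->
  exists (c : nat -> R) (n : nat -> nat), `|c 0%N| <= `|y| /\
    forall k, `|c k.+1| < d * 2^-1 ^+ k.+1 /\
              `|y - \sum_(j < k.+1) c j *: x (n j)| < d * 2^-1 ^+ k.+1.
Proof.
move=> d_gt0.
have step (q : X * R) : exists p : R * nat,
    0 < q.2 -> `|p.1| <= `|q.1| /\ `|q.1 - p.1 *: x p.2| < q.2.
  have [q2_gt0|] := boolP (0 < q.2); last by exists (0, 0%N).
  by have [c [n cn]] := approx_by_basis_vector q.1 q2_gt0; exists (c, n).
have [g g_spec] := choice step.
pose eps k := d * 2^-1 ^+ k.+1.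
have eps_gt0 k : 0 < eps k by rewrite mulr_gt0 // exprn_gt0.
pose fix r k := if k is k'.+1 then r k' - (g (r k', eps k')).1 *: x (g (r k', eps k')).2 else y.
exists (fun k => (g (r k, eps k)).1), (fun k => (g (r k, eps k)).2).
have c_le k : `|(g (r k, eps k)).1| <= `|r k| by have [] := g_spec (r k, eps k) (eps_gt0 k).
have r_lt k : `|r k.+1| < eps k by have [] := g_spec (r k, eps k) (eps_gt0 k).
have r_sum k : r k = y - \sum_(j < k) (g (r j, eps j)).1 *: x (g (r j, eps j)).2.
  elim: k => [|k IHk]; first by rewrite big_ord0 subr0.
  by rewrite big_ord_recr /= IHk opprD addrA.
split=> [|k]; first exact: c_le 0%N.
by rewrite -r_sum r_lt (le_lt_trans (c_le _)).
Qed.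

Lemma norm_tail_le (c : nat -> R) (n : nat -> nat) (d : R) N k :
    (forall j, `|c j.+1| < d * 2^-1 ^+ j.+1) -> (N <= k)%N ->
  `|\sum_(j < k.+1) c j *: e (n j) - \sum_(j < N.+1) c j *: e (n j)| <= d * 2^-1 ^+ N.
Proof.
move=> c_small Nk; rewrite -!(big_mkord xpredT (fun j => c j *: e (n j))).
rewrite (big_cat_nat (leq0n N.+1) (_ : N.+1 <= k.+1)%N) //= addrAC subrr add0r.
apply: le_trans (ler_norm_sum _ _ _) _.
apply: (@le_trans _ _ (\sum_(N.+1 <= j < k.+1) d * 2^-1 ^+ j)).
  rewrite big_nat [X in _ <= X]big_nat; apply: ler_sum => -[|j] // _.
  by rewrite normrZ e_normalized mulr1 ltW.
rewrite -mulr_sumr (_ : k.+1 = (N + (k - N)).+1)%N; last by lia.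
have d_ge0 : 0 <= d.
  by have := le_lt_trans (normr_ge0 _) (c_small 0%N); rewrite pmulr_lgt0 ?exprn_gt0 // => /ltW.
by rewrite sum_half_pow ler_wpM2l // lerBlDr lerDl exprn_ge0.
Qed.

Variable Q : {linear Z -> X}.
Hypothesis Q_e : forall n, Q (e n) = x n.
Hypothesis Q_contraction : forall z, `|Q z| <= `|z|.

Lemma lift_norm_le (y : X) (d : R) : 0 < d -> exists z, Q z = y /\ `|z| <= `|y| + d.
Proof.
move=> d_gt0; have [c [n [c0_le c_spec]]] := greedy_expansion y d_gt0.
pose S K := \sum_(j < K.+1) c j *: e (n j).
have S_tail N k : (N <= k)%N -> `|S k - S N| <= d * 2^-1 ^+ N.
  by apply: norm_tail_le => j; exact: (c_spec j).1.
have [z S_z] : exists z : Z, S @ \oo --> z.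
  apply: cauchy_seq_cvg => eps eps_gt0.
  have [N N_small] := half_pow_lt (divr_gt0 eps_gt0 d_gt0).
  exists N => k Nk; rewrite distrC; apply: le_lt_trans (S_tail N k Nk) _.
  by rewrite mulrC -ltr_pdivlMr // N_small.
have QS K : Q (S K) = \sum_(j < K.+1) c j *: x (n j).
  by rewrite linear_sum; apply: eq_bigr => j _; rewrite linearZ Q_e.
exists z; split.
  apply/subr0_eq/norm_le_eps_eq0 => eps eps_gt0.
  have eps2_gt0 : 0 < eps / 2 by rewrite divr_gt0.
  have [K1 z_near] := (cvg_seq_distP _ _).1 S_z _ eps2_gt0.
  have [K2 K2_small] := half_pow_lt (divr_gt0 eps2_gt0 d_gt0).
  pose K := maxn K1 K2.
  have y_near : `|y - Q (S K)| < eps / 2.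
    rewrite QS; apply: lt_trans (c_spec K).2 _.
    rewrite mulrC -ltr_pdivlMr // (le_lt_trans _ (K2_small K _)) ?leq_maxr //.
    by rewrite exprS ler_piMl ?exprn_ge0 // invf_le1 // ler1n.
  apply: le_trans (ler_distD (Q (S K)) _ _) _; rewrite -linearB [eps]splitr lerD //.
    by apply: le_trans (Q_contraction _) _; apply/ltW/z_near; rewrite leq_maxl.
  by rewrite distrC; apply: ltW.
apply/ler_addgt0Pr => eps eps_gt0.
have [K z_near] := (cvg_seq_distP _ _).1 S_z _ eps_gt0.
have S0_le : `|S 0%N| <= `|y| by rewrite /S big_ord1 normrZ e_normalized mulr1.
have := S_tail 0%N K (leq0n K); rewrite expr0 mulr1 => S_diff.
have z_split : z = (z - S K) + (S K - S 0%N) + S 0%N by rewrite !addrA !subrK.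
rewrite z_split; apply: le_trans (ler_normD _ _) _.
apply: le_trans (lerD (ler_normD _ _) (lexx _)) _.
have := z_near K (leqnn K); lra.
Qed.

End Lifting.

Lemma one_unconditional_monotone (R : realType) (U : normedModType R) (u : nat -> U) :
  ban_one_unconditional u -> ban_monotone u.
Proof.
move=> u_unc b N L NL.
(* flipping the signs of the coefficients beyond N and averaging isolates the first N terms *)
pose flip i := ~~ (i < N)%N.
have -> : bpsum b u N =
    2^-1 *: (\sum_(i < L) b i *: u i + \sum_(i < L) ((-1) ^+ flip i * b i) *: u i).
  rewrite -big_split /= (bpsum_restrictl b u NL) /bpsum scaler_sumr; apply: eq_bigr => i _.
  rewrite -scalerDl scalerA /restrict /flip /=; case: ifP => _ /=.
    by rewrite expr0 mul1r; congr (_ *: _); field.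
  by rewrite expr1 mulN1r subrr mulr0.
rewrite normrZ ger0_norm ?invr_ge0 //.
apply: le_trans (ler_wpM2l _ (ler_normD _ _)) _; first by rewrite invr_ge0.
by rewrite u_unc /bpsum; lra.
Qed.

Section BlockCoefficients.
Variable R : realType.
Variables (X U : normedModType R) (x : nat -> X) (u : nat -> U).

Definition block_coef (a : nat -> R) (s : seq (nat * nat)) (j : nat) : R :=
  \sum_(p <- s) (if p.1 == j then `|\sum_(p.1 <= i < p.2.+1) a i *: x i| else 0).

Lemma block_coef_cat a s1 s2 j :
  block_coef a (s1 ++ s2) j = block_coef a s1 j + block_coef a s2 j.
Proof. by rewrite /block_coef big_cat. Qed.

Lemma block_coef_eq0 a n m s j : ivls_within n m s -> (j < n)%N -> block_coef a s j = 0.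
Proof.
move=> s_in jn; rewrite /block_coef big1_seq // => p /andP[_ /(allP s_in)/andP[np1 _]].
by rewrite ifF //; apply/eqP; lia.
Qed.

Lemma block_vec_bpsum a s L : ban_admissible s -> ivls_within 0 L s ->
  block_vec x u a s = bpsum (block_coef a s) u L.
Proof.
rewrite admissibleE => /andP[s_wf _] s_in; rewrite /bpsum.
under [RHS]eq_bigr => j _ do rewrite /block_coef scaler_suml.
rewrite exchange_big /= /block_vec !big_seq; apply: eq_bigr => p p_s.
have p1L : (p.1 < L)%N by move: (allP s_wf _ p_s) (allP s_in _ p_s); rewrite /ivl_wf /=; lia.
rewrite (bigD1 (Ordinal p1L)) //=.
rewrite eqxx [X in _ + X]big1 ?addr0 // => j /negbTE jp; rewrite ifF ?scale0r //.
by apply: contraFF jp => /eqP pj; apply/eqP/val_inj.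
Qed.

End BlockCoefficients.

Section DisjointBlocks.
Variable R : realType.
Variables (X U : normedModType R) (x : nat -> X) (u : nat -> U).
Hypotheses (u_unc : ban_one_unconditional u) (u_bc : ban_boundedly_complete u).
Variables (a : nat -> R) (ends : nat -> nat) (blocks : nat -> seq (nat * nat)).
Hypothesis ends_lt : forall k, (ends k < ends k.+1)%N.
Hypothesis blocks_admissible : forall k, ban_admissible (blocks k).
Hypothesis blocks_within : forall k, ivls_within (ends k) (ends k.+1) (blocks k).

Let blocks_upto K := \big[cat/[::]]_(k < K) blocks k.

Lemma ends_ge k : (k <= ends k)%N.
Proof. by elim: k => // k IHk; exact: leq_ltn_trans IHk (ends_lt k). Qed.

Lemma ends_mono k k' : (k <= k')%N -> (ends k <= ends k')%N.
Proof.
move=> /subnK <-; elim: (k' - k)%N => // d IHd.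
exact: leq_trans IHd (ltnW (ends_lt (d + k))).
Qed.

Lemma blocks_upto_admissible K :
  ban_admissible (blocks_upto K) && ivls_within 0 (ends K) (blocks_upto K).
Proof.
elim: K => [|K IHK]; first by rewrite /blocks_upto big_ord0.
rewrite /blocks_upto big_ord_recr /=; case/andP: IHK => adm_K in_K.
by apply: admissible_cat adm_K in_K (blocks_admissible K) (blocks_within K) _; rewrite leqnn ltnW.
Qed.

Lemma block_coef_blocks_upto K1 K2 j : (K1 <= K2)%N -> (j < ends K1)%N ->
  block_coef x a (blocks_upto K2) j = block_coef x a (blocks_upto K1) j.
Proof.
move=> /subnK <- j_lt; elim: (K2 - K1)%N => // d IHd.
rewrite /blocks_upto addSn big_ord_recr block_coef_cat /= -/(blocks_upto _) IHd.
by rewrite (block_coef_eq0 _ _ (blocks_within _)) ?addr0 // (leq_trans j_lt) ?ends_mono ?leq_addl.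
Qed.

Lemma disjoint_blocks_small M : (forall K, `|block_vec x u a (blocks_upto K)| <= M) ->
  forall eps : R, 0 < eps -> exists K, `|block_vec x u a (blocks K)| < eps.
Proof.
move=> blocks_bdd eps eps_gt0.
(* all the blocks together form one vector expanded in (u_j) *)
pose beta j := block_coef x a (blocks_upto j.+1) j.
have beta_bpsum K : bpsum beta u (ends K) = block_vec x u a (blocks_upto K).
  have /andP[adm_K in_K] := blocks_upto_admissible K.
  rewrite (block_vec_bpsum _ _ _ adm_K in_K); apply: eq_bpsum => j j_lt.
  rewrite /beta -(@block_coef_blocks_upto j.+1 (maxn K j.+1)) ?leq_maxr //.
    by rewrite (@block_coef_blocks_upto K) ?leq_maxl.
  exact: leq_trans (ends_ge _).
have beta_bdd N : `|bpsum beta u N| <= M.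
  apply: le_trans (one_unconditional_monotone u_unc beta (ends_ge N)) _.
  by rewrite beta_bpsum.
have [l /cvg_seq_distP beta_l] := u_bc (ex_intro _ M beta_bdd).
have [K l_near] := beta_l _ (divr_gt0 eps_gt0 (ltr0Sn _ 1)).
exists K; have -> : block_vec x u a (blocks K) = bpsum beta u (ends K.+1) - bpsum beta u (ends K).
  by rewrite !beta_bpsum /blocks_upto big_ord_recr block_vec_cat addrAC subrr add0r.
apply: le_lt_trans (ler_distD l _ _) _; rewrite [eps]splitr distrC ltrD // l_near //.
  exact: leq_trans (ends_ge K) (ends_mono (leqnSn K)).
exact: ends_ge.
Qed.

End DisjointBlocks.

Section BoundedlyComplete.
Variable R : realType.
Variables (X U : normedModType R) (Z : completeNormedModType R).
Variables (x : nat -> X) (u : nat -> U) (e : nat -> Z).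
Hypotheses (x_normalized : ban_normalized x) (u_normalized : ban_normalized u).
Hypothesis norm_bpsum_e : forall n a, `|bpsum a e n| = Znorm x u (restrict 0 n a).

Lemma large_block a eps N : 0 < eps ->
    (exists n, (N <= n)%N /\ eps <= `|bpsum a e N - bpsum a e n|) ->
  exists p : nat * seq (nat * nat), [/\ (N < p.1)%N, ban_admissible p.2,
    ivls_within N p.1 p.2 & eps / 4 < `|block_vec x u a p.2|].
Proof.
move=> eps_gt0 [n [Nn far_n]].
have N_lt_n : (N < n)%N.
  by rewrite ltn_neqAle Nn andbT; apply: contraTneq far_n => ->; rewrite subrr normr0 -ltNge.
rewrite distrC (norm_bpsum_sub_e norm_bpsum_e) // in far_n.
have half_lt : eps / 2 < Znorm x u (restrict N n a).
  by apply: lt_le_trans far_n; rewrite ltr_pdivrMr // ltr_pMr // ltr1n.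
have [_ ne] := block_norms_bounded x_normalized u_normalized a N n.
have [_ [s s_adm <-] large_s] := sup_gt ne half_lt.
have clip := norm_block_vec_clip x u_normalized a s N_lt_n (leqnn n).
have /andP[inner_adm inner_in] := clip_inner_admissible N n s_adm.
have /andP[straddle_adm straddle_in] := clip_straddle_admissible N_lt_n s_adm.
rewrite (block_vec_restrict _ _ _ inner_in) ?(block_vec_restrict _ _ _ straddle_in) // in clip.
(* one of the two clipped families carries half of a near-optimal block norm *)
have [inner_large|inner_small] := ltP (eps / 4) `|block_vec x u a (clip_inner N n s)|.
  by exists (n, clip_inner N n s).
by exists (n, clip_straddle N n s); split => //=; lra.
Qed.

Lemma boundedly_complete_e :
  ban_one_unconditional u -> ban_boundedly_complete u -> ban_boundedly_complete e.
Proof.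
move=> u_unc u_bc a [M a_bdd]; apply: cauchy_seq_cvg => eps eps_gt0.
apply: contrapT => not_cauchy.
have far N : exists n, (N <= n)%N /\ eps <= `|bpsum a e N - bpsum a e n|.
  apply: contrapT => not_far; apply: not_cauchy; exists N => n Nn.
  by rewrite ltNge; apply/negP => far_n; apply: not_far; exists n.
have [g g_spec] := choice (fun N => large_block eps_gt0 (far N)).
pose ends k := iter k (fun t => (g t).1) 0%N; pose blocks k := (g (ends k)).2.
have [ends_lt blocks_adm blocks_in blocks_large] : [/\ forall k, (ends k < ends k.+1)%N,
    forall k, ban_admissible (blocks k), forall k, ivls_within (ends k) (ends k.+1) (blocks k) &
    forall k, eps / 4 < `|block_vec x u a (blocks k)|].
  by split=> k; have [] := g_spec (ends k).
have blocks_bdd K : `|block_vec x u a (\big[cat/[::]]_(k < K) blocks k)| <= M.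
  have /andP[adm_K in_K] := blocks_upto_admissible ends_lt blocks_adm blocks_in K.
  rewrite -(block_vec_restrict _ _ _ in_K (leqnn _)); apply: le_trans (a_bdd (ends K)).
  by rewrite norm_bpsum_e norm_block_vec_le_Znorm.
have [K small_K] := disjoint_blocks_small u_unc u_bc ends_lt blocks_adm blocks_in blocks_bdd
  (divr_gt0 eps_gt0 (ltr0Sn _ 3)).
by have := blocks_large K; rewrite ltNge ltW.
Qed.

End BoundedlyComplete.

Lemma quotient_map_of_lift (R : realType) (V W : normedModType R) (Q : V -> W) :
    (forall v, `|Q v| <= `|v|) ->
    (forall w d, 0 < d -> exists v, Q v = w /\ `|v| <= `|w| + d) ->
  ban_quotient_map Q.
Proof.
move=> Q_contraction Q_lift w.
have [v [Qv _]] := Q_lift w 1 ltr01; split; first by exists v.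
have ne : [set `|v| | v in [set v | Q v = w]] !=set0 by exists `|v|, v.
apply/eqP; rewrite eq_le; apply/andP; split.
  by apply: lb_le_inf ne _ => _ [v' /= <- <-]; exact: Q_contraction.
apply/ler_addgt0Pr => d /(Q_lift w)[v' [Qv' v'_le]]; apply: le_trans v'_le.
by apply: ge_inf; [exists 0 => _ [? _ <-] | exists v'].
Qed.

Section QuotientOperator.
Variable R : realType.
Variables (X : completeNormedModType R) (U : normedModType R) (Z : completeNormedModType R).
Variables (x : nat -> X) (u : nat -> U) (e : nat -> Z).
Hypotheses (x_normalized : ban_normalized x) (u_normalized : ban_normalized u).
Hypothesis x_sphere_dense : forall y : X, `|y| = 1 -> forall eps : R, 0 < eps ->
  exists n, `|y - x n| < eps \/ `|y + x n| < eps.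
Hypothesis norm_bpsum_e : forall n a, `|bpsum a e n| = Znorm x u (restrict 0 n a).
Hypothesis span_dense : forall (z : Z) (eps : R), 0 < eps ->
  exists (n : nat) (a : nat -> R), `|z - bpsum a e n| < eps.

Lemma quotient_operator : exists Q : {linear Z -> X},
  [/\ forall (a : nat -> R) (z : Z), bpsum a e @ \oo --> z -> bpsum a x @ \oo --> Q z,
      ban_quotient_map Q, forall z : Z, `|Q z| <= `|z| &
      forall eps : R, 0 < eps -> forall y : X, `|y| <= 1 ->
        exists z : Z, `|z| <= 1 + eps /\ Q z = y].
Proof.
have bpsum_x_restrict a n N : (n <= N)%N -> bpsum a x n = bpsum (restrict 0 n a) x N.
  exact: bpsum_restrictl.
have bpsum_x_linear c a b n : bpsum (fun i => c * a i + b i) x n = c *: bpsum a x n + bpsum b x n.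
  by rewrite bpsumD bpsumZ.
have bpsum_x_bounded a n : `|bpsum a x n| <= 1 * `|bpsum a e n|.
  by rewrite mul1r (norm_bpsum_x_le x_normalized u_normalized norm_bpsum_e).
have [f f_near] := extension_exists span_dense ler01 bpsum_x_restrict
  bpsum_x_linear bpsum_x_bounded.
pose Q : {linear Z -> X} := HB.pack f (GRing.isLinear.Build _ _ _ _ f
  (extension_linear span_dense ler01 bpsum_x_restrict bpsum_x_linear f_near)).
have Q_contraction z : `|Q z| <= `|z|.
  by rewrite -[`|z|]mul1r (extension_bounded bpsum_x_linear f_near).
have Q_e n : Q (e n) = x n by rewrite -(bpsum_delta e n) /= (extension_bpsum f_near) bpsum_delta.
have Q_lift := lift_norm_le (normalized_e x_normalized u_normalized norm_bpsum_e)
  x_sphere_dense Q_e Q_contraction.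
exists Q; split => //.
- move=> a z /cvg_seq_distP az; apply/cvg_seq_distP => eps /az[N zN].
  by exists N => n Nn; apply: le_lt_trans (f_near z a n) _; rewrite mul1r zN.
- exact: quotient_map_of_lift.
- move=> eps eps_gt0 y y_le1; have [z [Qz z_le]] := Q_lift y eps eps_gt0.
  by exists z; split => //; apply: le_trans z_le _; rewrite lerD2r.
Qed.

End QuotientOperator.

Theorem propositionA2 (R : realType)
  (X : completeNormedModType R) (x : nat -> X)
  (U : completeNormedModType R) (u : nat -> U)
  (Z : completeNormedModType R) (e : nat -> Z) :
  ban_separable X ->
  (forall n, `|x n| = 1) ->
  (forall y : X, `|y| = 1 -> forall eps : R, 0 < eps ->
     exists n, `|y - x n| < eps \/ `|y + x n| < eps) ->
  ban_schauder_basis u -> ban_normalized u -> ban_one_unconditional u ->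
  (forall (n : nat) (a : nat -> R),
     `|bpsum a e n| = Znorm x u (fun i => if (i < n)%N then a i else 0)) ->
  (forall (z : Z) (eps : R), 0 < eps ->
     exists (n : nat) (a : nat -> R), `|z - bpsum a e n| < eps) ->
  (ban_normalized e /\ ban_monotone e /\ ban_schauder_basis e) /\
  (ban_boundedly_complete u -> ban_boundedly_complete e) /\
  (exists Q : {linear Z -> X},
     (forall (a : nat -> R) (z : Z), bpsum a e @ \oo --> z ->
        bpsum a x @ \oo --> Q z) /\
     ban_quotient_map Q /\
     (forall z : Z, `|Q z| <= `|z|) /\
     (forall eps : R, 0 < eps -> forall y : X, `|y| <= 1 ->
        exists z : Z, `|z| <= 1 + eps /\ Q z = y)).
Proof.
move=> _ x_normalized x_sphere_dense _ u_normalized u_unc norm_bpsum_e span_dense.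
split; [split; [|split]|split].
- exact: normalized_e x_normalized u_normalized norm_bpsum_e.
- exact: monotone_e x_normalized u_normalized norm_bpsum_e.
- exact: schauder_basis_e x_normalized u_normalized norm_bpsum_e span_dense.
- exact: boundedly_complete_e x_normalized u_normalized norm_bpsum_e u_unc.
have [Q [Q_cvg Q_quotient Q_contraction Q_lift]] :=
  quotient_operator x_normalized u_normalized x_sphere_dense norm_bpsum_e span_dense.
by exists Q.
Qed.
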